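(* For every type $\tau\in\mathbb{T}_C$, $|\bigcap\mathbb{P}(\tau)|\le|\tau|^2$, where $|\cdot|$ denotes the number of nodes in the syntax tree of a type.
   Context: Types $\mathbb{T}_C\ni\tau ::= a\mid\alpha\mid\omega\mid\tau_1\to\tau_2\mid\tau_1\cap\tau_2\mid c(\tau)$ ($a$ constants, $\alpha$ type variables, $c$ unary constructors). Paths: $\pi ::= a\mid\alpha\mid\sigma\to\pi\mid c(\omega)\mid c(\pi)$. $\mathbb{P}(a)=\{a\}$, $\mathbb{P}(\alpha)=\{\alpha\}$, $\mathbb{P}(\omega)=\emptyset$, $\mathbb{P}(\sigma\to\tau)=\{\sigma\to\pi\mid\pi\in\mathbb{P}(\tau)\}$, $\mathbb{P}(\sigma\cap\tau)=\mathbb{P}(\sigma)\cup\mathbb{P}(\tau)$, $\mathbb{P}(c(\tau))=\{c(\omega)\}$ if $\mathbb{P}(\tau)=\emptyset$, else $\{c(\pi)\mid\pi\in\mathbb{P}(\tau)\}$. $\bigcap\mathbb{P}(\tau)$ denotes the type $\pi_1\cap\cdots\cap\pi_n$ where $\mathbb{P}(\tau)=\{\pi_1,\ldots,\pi_n\}$, and $\omega$ if $\mathbb{P}(\tau)=\emptyset$. *)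

From Stdlib Require Import List Arith.
Import ListNotations.

Inductive ty : Type :=
| TConst : nat -> ty
| TVar   : nat -> ty
| TOmega : ty
| TArrow : ty -> ty -> ty
| TInter : ty -> ty -> ty
| TCons  : nat -> ty -> ty.

Definition ty_eq_dec : forall s t : ty, {s = t} + {s <> t}.
Proof. decide equality; apply Nat.eq_dec. Defined.

Fixpoint tsize (t : ty) : nat :=
  match t with
  | TConst _ | TVar _ | TOmega => 1
  | TArrow s u => 1 + tsize s + tsize u
  | TInter s u => 1 + tsize s + tsize u
  | TCons _ s => 1 + tsize s
  end.

(* P(tau), computed as a list (possibly with repetitions) *)
Fixpoint paths_list (t : ty) : list ty :=
  match t with
  | TConst a => [TConst a]
  | TVar x => [TVar x]
  | TOmega => []
  | TArrow s u => map (TArrow s) (paths_list u)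
  | TInter s u => paths_list s ++ paths_list u
  | TCons c s =>
      match paths_list s with
      | [] => [TCons c TOmega]
      | l => map (TCons c) l
      end
  end.

Definition paths (t : ty) : list ty := nodup ty_eq_dec (paths_list t).

Fixpoint bigcap (l : list ty) : ty :=
  match l with
  | [] => TOmega
  | [p] => p
  | p :: l' => TInter p (bigcap l')
  end.

Definition bigcap_paths (t : ty) : ty := bigcap (paths t).

(* Each path of [t] is read off [t] by pruning, so it has size at most |t|,
   and an induction on [t] shows that [t] has at most (|t| + 1) / 2 paths.
   The intersection of k paths of size at most n has size at most
   k (n + 1) - 1, and k (n + 1) <= n^2 + 1 whenever 2 k <= n + 1. *)

From Stdlib Require Import List Arith Lia.
Import ListNotations.

Lemma tsize_pos (t : ty) : 1 <= tsize t.
Proof. destruct t; simpl; lia. Qed.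

Lemma bigcap_tsize_le (l : list ty) (n : nat) :
  l <> [] -> (forall p, In p l -> tsize p <= n) ->
  tsize (bigcap l) + 1 <= length l * (n + 1).
Proof.
  induction l as [|p [|q l] IH]; intros Hne Hle; [congruence | |].
  - specialize (Hle p (or_introl eq_refl)); simpl; lia.
  - assert (Hp : tsize p <= n) by (apply Hle; left; reflexivity).
    assert (Hl : tsize (bigcap (q :: l)) + 1 <= length (q :: l) * (n + 1)).
    { apply IH; [discriminate | intros r Hr; apply Hle; right; exact Hr]. }
    change (tsize (TInter p (bigcap (q :: l))) + 1
            <= S (length (q :: l)) * (n + 1)).
    simpl in *; lia.
Qed.

Lemma paths_list_tsize_le (t p : ty) : In p (paths_list t) -> tsize p <= tsize t.
Proof.
  revert p; induction t as [a|x| |s _ u IHu|s IHs u IHu|c s IHs]; intros p Hp;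
    simpl in Hp |- *.
  - destruct Hp as [<-|[]]; simpl; lia.
  - destruct Hp as [<-|[]]; simpl; lia.
  - destruct Hp.
  - apply in_map_iff in Hp as [q [<- Hq]]; simpl; specialize (IHu q Hq); lia.
  - apply in_app_or in Hp as [Hp|Hp]; [specialize (IHs p Hp)|specialize (IHu p Hp)]; lia.
  - destruct (paths_list s) as [|q l] eqn:E.
    + destruct Hp as [<-|[]]; simpl; pose proof (tsize_pos s); lia.
    + change (In p (map (TCons c) (q :: l))) in Hp.
      apply in_map_iff in Hp as [r [<- Hr]]; simpl; specialize (IHs r Hr); lia.
Qed.

Lemma paths_list_length (t : ty) : 2 * length (paths_list t) <= tsize t + 1.
Proof.
  induction t as [a|x| |s _ u IHu|s IHs u IHu|c s IHs]; simpl;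
    try rewrite length_map; try rewrite length_app; try lia.
  destruct (paths_list s) as [|q l]; simpl in *; [| rewrite length_map]; lia.
Qed.

Lemma paths_tsize_le (t p : ty) : In p (paths t) -> tsize p <= tsize t.
Proof. intro Hp; apply paths_list_tsize_le, (nodup_In ty_eq_dec), Hp. Qed.

Lemma paths_length (t : ty) : 2 * length (paths t) <= tsize t + 1.
Proof.
  enough (length (paths t) <= length (paths_list t))
    by (pose proof (paths_list_length t); lia).
  apply NoDup_incl_length; [apply NoDup_nodup|].
  intros p; apply nodup_In.
Qed.

Theorem lemma4p9 : forall t : ty, tsize (bigcap_paths t) <= tsize t * tsize t.
Proof.
  intro t; unfold bigcap_paths.
  pose proof (tsize_pos t).
  pose proof (paths_length t).
  destruct (paths t) as [|p l] eqn:E.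
  - simpl; nia.
  - rewrite <- E in *.
    assert (Hcap := bigcap_tsize_le (paths t) (tsize t)
                      ltac:(rewrite E; discriminate) (paths_tsize_le t)).
    nia.
Qed.
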